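(* Let $\Lambda$ be a countable index set, $\overline{a},\overline{r}$ sequences of positive reals indexed by $\Lambda$, $t\in(0,2)$, $x^+\in k_t$ and $\alpha>0$. Let $\Lambda_\alpha=\{j\in\Lambda:\overline{a}_j^{-2}\overline{r}_j\alpha<|x^+_j|\}$ and let $P_\alpha:\mathbb{R}^\Lambda\to\mathbb{R}^\Lambda$ be the coordinate projection $(P_\alpha x)_j=x_j$ for $j\in\Lambda_\alpha$ and $(P_\alpha x)_j=0$ otherwise. Then \[\|P_\alpha x\|_{\overline{r},1}\le\|x^+\|_{k_t}^{t/2}\,\alpha^{-t/2}\,\|x\|_{\overline{a},2}\quad\text{for all } x\in\ell^1_{\overline{a}}.\]
   Context: For a sequence $\omega$ of positive reals and $p\in(0,\infty)$, $\|x\|_{\omega,p}=\left(\sum_{j\in\Lambda}\omega_j^p|x_j|^p\right)^{1/p}$ and $\ell^p_\omega=\{x\in\mathbb{R}^\Lambda:\|x\|_{\omega,p}<\infty\}$. For $t\in(0,2)$, $k_t=\{x\in\mathbb{R}^\Lambda:\|x\|_{k_t}<\infty\}$ with $\|x\|_{k_t}=\sup_{\alpha>0}\alpha\left(\sum_{j\in\Lambda}\overline{a}_j^{-2}\overline{r}_j^2\mathbf{1}_{\{\overline{a}_j^{-2}\overline{r}_j\alpha<|x_j|\}}\right)^{1/t}$. *)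

From HB Require Import structures.
From mathcomp Require Import all_boot all_order all_algebra.
From mathcomp Require Import all_classical all_reals all_analysis.
Set Implicit Arguments. Unset Strict Implicit. Unset Printing Implicit Defensive.
Import Order.TTheory GRing.Theory Num.Theory.
Local Open Scope classical_set_scope.
Local Open Scope ring_scope.

Definition wnorm {R : realType} {L : countType} (w : L -> R) (p : R) (x : L -> R)
  : \bar R :=
  poweR (esum [set: L] (fun j => (((w j) `^ p * `|x j| `^ p)%R)%:E)) (p^-1).

Definition in_lw {R : realType} {L : countType} (w : L -> R) (p : R) (x : L -> R) :=
  (wnorm w p x < +oo)%E.

Definition Lam {R : realType} {L : countType} (a r : L -> R) (alpha : R) (x : L -> R)
  : set L := [set j | (a j)^-2 * r j * alpha < `|x j| ].

Definition ktnorm {R : realType} {L : countType} (a r : L -> R) (t : R) (x : L -> R)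
  : \bar R :=
  ereal_sup [set (alpha%:E * poweR (esum [set: L]
        (fun j => (((a j)^-2 * (r j)^+2 * (\1_(Lam a r alpha x) j : R))%R)%:E)) (t^-1))%E
      | alpha in [set alpha : R | 0 < alpha]].

Definition in_kt {R : realType} {L : countType} (a r : L -> R) (t : R) (x : L -> R) :=
  (ktnorm a r t x < +oo)%E.

Definition Pproj {R : realType} {L : countType} (S : set L) (x : L -> R) : L -> R :=
  fun j => if `[< S j >] then x j else 0.

From HB Require Import structures.
From mathcomp Require Import all_boot all_order all_algebra.
From mathcomp Require Import all_classical all_reals all_analysis.
From mathcomp Require Import finmap ring.
Import Order.TTheory GRing.Theory Num.Theory.
Local Open Scope ring_scope.

(* Cauchy-Schwarz, with r_j |x_j| = (a_j^-1 r_j) (a_j |x_j|) on Lambda_alpha, gives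
   ||P_alpha x||_{r,1} <= S^(1/2) ||x||_{a,2} where S = sum_{Lambda_alpha} a_j^-2 r_j^2.
   The term of index alpha in the supremum defining ||x^+||_{k_t} is alpha S^(1/t),
   so S^(1/2) = (S^(1/t))^(t/2) <= (||x^+||_{k_t} / alpha)^(t/2). *)

Lemma mul2_le_of_sqr_le {R : realFieldType} (a b c d x y : R) :
  0 <= a -> 0 <= b -> 0 <= c -> 0 <= d -> 0 <= x -> 0 <= y ->
  x ^+ 2 <= a * b -> y ^+ 2 <= c * d -> 2 * (x * y) <= a * d + b * c.
Proof.
move=> a0 b0 c0 d0 x0 y0 xab ycd.
rewrite -ler_sqr ?nnegrE ?addr_ge0 ?mulr_ge0//.
have amgm : 4 * ((a * d) * (b * c)) <= (a * d + b * c) ^+ 2.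
  by rewrite -subr_ge0 (_ : _ - _ = (a * d - b * c) ^+ 2) ?sqr_ge0//; ring.
apply: le_trans amgm.
rewrite exprMn (_ : 2 ^+ 2 = 4 :> R); last by rewrite expr2 -natrM.
rewrite ler_pM2l ?ltr0n// exprMn (_ : _ * _ * _ = (a * b) * (c * d)); last by ring.
by rewrite ler_pM ?sqr_ge0.
Qed.

Lemma sum_cauchy_schwarz {R : realFieldType} (I : Type) (s : seq I) (f g h : I -> R) :
  (forall i, 0 <= f i) -> (forall i, 0 <= g i) -> (forall i, 0 <= h i) ->
  (forall i, h i ^+ 2 <= f i * g i) ->
  (\sum_(i <- s) h i) ^+ 2 <= (\sum_(i <- s) f i) * (\sum_(i <- s) g i).
Proof.
move=> f0 g0 h0 hfg; elim: s => [|i s IHs]; first by rewrite !big_nil expr0n mul0r.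
rewrite !big_cons.
set H := \sum_(j <- s) h j; set F := \sum_(j <- s) f j; set G := \sum_(j <- s) g j.
have cross : 2 * (h i * H) <= f i * G + g i * F.
  by apply: mul2_le_of_sqr_le; rewrite ?sumr_ge0.
rewrite -subr_ge0 (_ : _ - _ = (f i * g i - h i ^+ 2) + (F * G - H ^+ 2)
  + (f i * G + g i * F - 2 * (h i * H))); last by ring.
by apply: addr_ge0; [apply: addr_ge0|]; rewrite subr_ge0.
Qed.

Section esum_cauchy_schwarz.
Context {R : realType} {T : choiceType} (D : set T) {f g h : T -> R}.
Hypotheses (f0 : forall i, 0 <= f i) (g0 : forall i, 0 <= g i)
  (h0 : forall i, 0 <= h i) (hfg : forall i, h i ^+ 2 <= f i * g i).

Local Open Scope ereal_scope.

Let fsum_le_esum (u : T -> R) (X : set T) : fsets D X ->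
  (\sum_(i <- fset_set X) u i)%:E <= \esum_(i in D) (u i)%:E.
Proof.
by move=> [finX XD]; apply: esum_ge; exists X; rewrite ?fsumEFin ?fsbig_finite.
Qed.

Lemma esum_cauchy_schwarz :
  \esum_(i in D) (h i)%:E <=
    sqrte (\esum_(i in D) (f i)%:E) * sqrte (\esum_(i in D) (g i)%:E).
Proof.
have esumEFin_ge0 (u : T -> R) :
    (forall i, (0 <= u i)%R) -> 0 <= \esum_(i in D) (u i)%:E.
  by move=> u0; apply: esum_ge0 => i _; rewrite lee_fin.
rewrite -sqrteM ?esumEFin_ge0//; apply: ge_ereal_sup => _ [X DX <-].
have [finX _] := DX; rewrite fsumEFin// fsbig_finite//=.
set s := fset_set X.
apply: (@le_trans _ _ (sqrte ((\sum_(i <- s) f i)%:E * (\sum_(i <- s) g i)%:E))).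
  rewrite -EFinM /= lee_fin -(ger0_norm (sumr_ge0 _ (fun i _ => h0 i))).
  rewrite -sqrtr_sqr ler_sqrt ?mulr_ge0 ?sumr_ge0//.
  exact: sum_cauchy_schwarz.
rewrite lee_sqrt ?mule_ge0 ?esumEFin_ge0//.
by apply: lee_pmul; rewrite ?lee_fin ?sumr_ge0 ?fsum_le_esum.
Qed.

End esum_cauchy_schwarz.

Lemma sqrt_le_of_scaled_powR {R : realType} (alpha t s k : R) :
  0 < alpha -> 0 < t -> 0 <= s -> alpha * s `^ t^-1 <= k ->
  Num.sqrt s <= k `^ (t / 2) * alpha `^ (- (t / 2)).
Proof.
move=> alpha0 t0 s0 le_k.
have le_ratio : s `^ t^-1 <= k / alpha by rewrite ler_pdivlMr// mulrC.
have ratio0 : 0 <= k / alpha := le_trans (powR_ge0 _ _) le_ratio.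
have := ge0_ler_powR (ltW (divr_gt0 t0 (ltr0Sn R 1))) (powR_ge0 _ _) ratio0 le_ratio.
rewrite -powRrM mulrA mulVf ?gt_eqF// mul1r powR12_sqrt// => /le_trans; apply.
have k0 : 0 <= k by move: ratio0; rewrite pmulr_lge0 ?invr_gt0.
by rewrite powRM ?invr_ge0 ?(ltW alpha0)// -powR_inv1 ?(ltW alpha0)// -powRrM mulN1r.
Qed.

Lemma sqrte_le_of_scaled_poweR {R : realType} (alpha t : R) (S K : \bar R) :
  0 < alpha -> 0 < t -> (0 <= S)%E -> (K < +oo)%E ->
  (alpha%:E * S `^ t^-1 <= K)%E ->
  (sqrte S <= K `^ (t / 2) * (alpha `^ (- (t / 2)))%:E)%E.
Proof.
move=> alpha0 t0 + Kfin; case: S => [s||//] S0 le_K; last first.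
  move: le_K; rewrite poweRyr ?invr_neq0 ?gt_eqF// gt0_muley ?lte_fin//.
  by rewrite leye_eq => /eqP Ky; rewrite Ky ltxx in Kfin.
move: S0 le_K; rewrite lee_fin poweR_EFin -EFinM => s0.
case: K Kfin => [k _|//|_]; last by rewrite leeNy_eq.
by rewrite poweR_EFin -EFinM !lee_fin; exact: sqrt_le_of_scaled_powR.
Qed.

Lemma sqr_Pproj_le_weights {R : realType} {L : countType} (S : set L) (a r x : L -> R) j :
  0 < a j ->
  (r j * `|Pproj S x j|) ^+ 2 <=
    (a j)^-2 * (r j)^+2 * (\1_S j : R) * ((a j) `^ 2 * `|x j| `^ 2).
Proof.
move=> a0; rewrite (powR_mulrn 2 (ltW a0)) (powR_mulrn 2 (normr_ge0 _)) /Pproj indicE.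
case: asboolP => [Sj|nSj]; last by rewrite memNset// normr0 mulr0 expr0n/= !mulr0 mul0r.
rewrite mem_set// mulr1 [leRHS](_ : _ = (r j * `|x j|) ^+ 2)//.
by field; rewrite gt_eqF.
Qed.

Theorem lemma4p1 (R : realType) (L : countType) (a r : L -> R)
  (ha : forall j, 0 < a j) (hr : forall j, 0 < r j)
  (t : R) (ht0 : 0 < t) (ht2 : t < 2)
  (xp : L -> R) (hxp : in_kt a r t xp)
  (alpha : R) (halpha : 0 < alpha) :
  forall x : L -> R, in_lw a 1 x ->
    (wnorm r 1 (Pproj (Lam a r alpha xp) x)
      <= poweR (ktnorm a r t xp) (t / 2) * (alpha `^ (- (t / 2)))%:E * wnorm a 2 x)%E.
Proof.
move=> x _.
set Lm := Lam a r alpha xp.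
set weight := fun j => (a j)^-2 * (r j)^+2 * (\1_Lm j : R).
set S := esum [set: L] (fun j => (weight j)%:E).
have weight0 j : 0 <= weight j.
  by rewrite /weight indicE mulr_ge0 ?ler0n// mulr_ge0 ?sqr_ge0// invr_ge0 exprn_ge0// ltW.
have le_ktnorm : (alpha%:E * S `^ t^-1 <= ktnorm a r t xp)%E.
  by apply: ereal_sup_ubound; exists alpha.
have -> : wnorm r 1 (Pproj Lm x) = esum [set: L] (fun j => (r j * `|Pproj Lm x j|)%:E).
  rewrite /wnorm invr1 poweRe1; last by apply: esum_ge0 => j _; rewrite lee_fin mulr_ge0 ?powR_ge0.
  by apply: eq_esum => j _; rewrite powRr1 ?(ltW (hr j))// powRr1.
rewrite /wnorm poweR12_sqrt ?esum_ge0// => [|j _]; last by rewrite lee_fin mulr_ge0 ?powR_ge0.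
have l2_weight0 j : 0 <= (a j) `^ 2 * `|x j| `^ 2 by rewrite mulr_ge0 ?powR_ge0.
have proj_weight0 j : 0 <= r j * `|Pproj Lm x j| by rewrite mulr_ge0 ?(ltW (hr j)).
have := esum_cauchy_schwarz [set: L] weight0 l2_weight0 proj_weight0.
move=> /(_ (fun j => sqr_Pproj_le_weights Lm a r x j (ha j)))/le_trans; apply.
apply: lee_wpmul2r; first exact: sqrte_ge0.
by apply: sqrte_le_of_scaled_poweR; rewrite ?esum_ge0// => j _; rewrite lee_fin.
Qed.
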